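(* Let $\mathcal{T}$ be an increasing tree of depth $D$, i.e. $c(u)\le c(v)$ whenever $u$ is an ancestor of $v$. Then the online algorithm \textsc{Noadd} is $D$-competitive for MLAPD on $\mathcal{T}$: for every request set $\mathcal{R}$, the total cost of the schedule produced by \textsc{Noadd} is at most $D$ times the cost of an optimal (offline) schedule.
   Context: Multi-level aggregation problem with deadlines (MLAPD): an instance is a rooted tree $\mathcal{T}$ with root $r$ and positive node costs $c(v)>0$, together with a set $\mathcal{R}$ of requests $\rho=(v,a,d)$, each issued at a node $v$, with arrival time $a$ and deadline $d\ge a$ (deadlines are assumed distinct). A service is a pair $(S,t)$ where $S$ is a subtree of $\mathcal{T}$ containing $r$ (so if $v\in S$ then all ancestors of $v$ are in $S$) and $t$ is the transmission time; it costs $c(S)=\sum_{u\in S}c(u)$. A request $(v,a,d)$ is satisfied by $(S,t)$ if $v\in S$ and $a\le t\le d$. A schedule is a set of services; it is feasible if every request is satisfied by some service; its cost is the sum of its services' costs. Online: requests are revealed at their arrival times, the tree is known in advance. The depth $D$ is the maximum number of nodes on a root-to-leaf path. For a request $\rho$ issued at $v$, $P_\rho$ denotes the set of nodes on the path from $r$ to $v$. An algorithm is $c$-competitive if its cost is at most $c$ times the optimal cost on every instance. \textsc{Noadd}: whenever a request $\rho$ that has not yet been satisfied by a previous transmission reaches its deadline $d_\rho$, it transmits the service $(P_\rho,d_\rho)$ and nothing else. *)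

From HB Require Import structures.
From mathcomp Require Import all_boot all_order all_algebra.
Set Implicit Arguments. Unset Strict Implicit. Unset Printing Implicit Defensive.
Import Order.TTheory GRing.Theory Num.Theory.
Local Open Scope ring_scope.

Section MLAPD.
Variables (R : realFieldType) (V : finType).

(* A rooted tree on the finite node set V is given by a parent function [par]
   and a root [r]: the root is its own parent and every node reaches the root
   by iterating [par]. *)
Definition is_rooted_tree (par : V -> V) (r : V) : Prop :=
  par r = r /\ forall v, exists k : nat, iter k par v = r.

(* u is an ancestor of v (or v itself).  Reachability by iterating a function
   on a finite type is always witnessed within #|V| steps. *)
Definition ancestor (par : V -> V) (u v : V) : bool :=
  [exists k : 'I_#|V|, iter k par v == u].

Definition root_path (par : V -> V) (v : V) : {set V} :=
  [set u | ancestor par u v].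

Definition depth (par : V -> V) : nat := \max_(v : V) #|root_path par v|.

Definition increasing_tree (par : V -> V) (c : V -> R) : Prop :=
  forall u v, ancestor par u v -> c u <= c v.

Definition request := (V * R * R)%type.
Definition req_node (q : request) : V := q.1.1.
Definition req_arr (q : request) : R := q.1.2.
Definition req_dl (q : request) : R := q.2.

Definition service := ({set V} * R)%type.

Definition valid_service (par : V -> V) (r : V) (s : service) : Prop :=
  r \in s.1 /\ forall u v, ancestor par u v -> v \in s.1 -> u \in s.1.

Definition satisfies (s : service) (q : request) : bool :=
  (req_node q \in s.1) && (req_arr q <= s.2 <= req_dl q).

Definition schedule := seq service.

Definition feasible (sch : schedule) (rs : seq request) : bool :=
  all (fun q => has (fun s => satisfies s q) sch) rs.

Definition service_cost (c : V -> R) (s : service) : R := \sum_(u in s.1) c u.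

Definition schedule_cost (c : V -> R) (sch : schedule) : R :=
  \sum_(s <- sch) service_cost c s.

Definition noadd (par : V -> V) (rs : seq request) : schedule :=
  foldl (fun sch q =>
           if has (fun s => satisfies s q) sch then sch
           else rcons sch (root_path par (req_node q), req_dl q))
        [::] (sort (fun q1 q2 : request => req_dl q1 <= req_dl q2) rs).

End MLAPD.

From HB Require Import structures.
From mathcomp Require Import all_boot all_order all_algebra.
Import Order.TTheory GRing.Theory Num.Theory.
Set Implicit Arguments. Unset Strict Implicit.
Local Open Scope ring_scope.

(* Call a request critical if NOADD transmits a service at its deadline; NOADD
   then transmits exactly the path services (P_q, d_q) of the critical requests
   q, taken in increasing order of deadline, and no earlier path service of a
   critical request satisfies a later critical request.

   Upper bound: on an increasing tree every node of P_q costs at most c(q), so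
   NOADD pays at most D * c(q) for the critical request q.

   Charging: charge c(q) to a service of the offline schedule satisfying q.
   Two critical requests charged to the same service (S, t) sit at distinct
   nodes: if q1, q2 with d1 <= d2 sat at the same node, then a2 <= t <= d1,
   so (P_q1, d1) would already satisfy q2.  Hence a service (S, t) is charged
   at most c(S), and sum_q c(q) <= cost of the offline schedule. *)

Lemma ler_sum_uniq_subset (R : numDomainType) (T : finType) (w : T -> R)
    (l : seq T) (A : {set T}) :
  (forall x, 0 <= w x) -> uniq l -> {subset l <= A} ->
  \sum_(x <- l) w x <= \sum_(x in A) w x.
Proof.
move=> w_ge0 l_uniq lA.
rewrite big_uniq // [X in _ <= X](bigID (mem l)) /=.
have -> : \sum_(x in A | x \in l) w x = \sum_(x in l) w x.
  by apply: eq_bigl => x; apply/andP/idP => [[] | xl] //; split; rewrite ?lA.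
by rewrite lerDl sumr_ge0.
Qed.

Section Noadd.
Variables (R : realFieldType) (V : finType) (par : V -> V).

Local Notation request := (request R V).

Definition deadline_le (q1 q2 : request) : bool := req_dl q1 <= req_dl q2.

Definition path_service (q : request) : service R V :=
  (root_path par (req_node q), req_dl q).

Definition unserved_by (q1 q2 : request) : bool :=
  ~~ satisfies (path_service q1) q2.

Definition critical_step (Q : seq request) (q : request) : seq request :=
  if has (fun q' => satisfies (path_service q') q) Q then Q else rcons Q q.

Definition critical_requests (rs : seq request) : seq request :=
  foldl critical_step [::] (sort deadline_le rs).

Lemma foldl_critical_step (Q : seq request) (s : seq request) :
  map path_service (foldl critical_step Q s) =
  foldl (fun sch q => if has (fun sv => satisfies sv q) sch then sch
                      else rcons sch (root_path par (req_node q), req_dl q))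
        (map path_service Q) s.
Proof.
elim: s Q => [|q s IHs] Q //=.
rewrite IHs /critical_step has_map.
by case: ifP => _ //; rewrite map_rcons.
Qed.

Lemma noadd_critical (rs : seq request) :
  noadd par rs = map path_service (critical_requests rs).
Proof. by rewrite /critical_requests foldl_critical_step. Qed.

Lemma critical_step_subseq (Q s : seq request) :
  subseq (foldl critical_step Q s) (Q ++ s).
Proof.
elim: s Q => [|q s IHs] Q /=; first by rewrite cats0.
rewrite /critical_step; case: ifP => _; last by rewrite -cat_rcons.
by apply: subseq_trans (IHs Q) _; rewrite subseq_cat2l subseq_cons.
Qed.

Lemma critical_step_unserved (Q s : seq request) :
  pairwise unserved_by Q -> pairwise unserved_by (foldl critical_step Q s).
Proof.
elim: s Q => [|q s IHs] Q //= unservedQ; apply: IHs.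
rewrite /critical_step; case: ifP => // servedq.
by rewrite pairwise_rcons unservedQ all_predC servedq.
Qed.

Lemma critical_mem (rs : seq request) (q : request) :
  q \in critical_requests rs -> q \in rs.
Proof.
move/(mem_subseq (critical_step_subseq [::] _)).
by rewrite mem_sort.
Qed.

Lemma critical_sorted (rs : seq request) :
  pairwise deadline_le (critical_requests rs).
Proof.
have deadline_trans : transitive deadline_le by move=> ? ? ?; apply: le_trans.
rewrite -sorted_pairwise //.
apply: subseq_sorted (critical_step_subseq [::] _) _ => //.
by apply: sort_sorted => q1 q2; apply: le_total.
Qed.

Lemma critical_unserved (rs : seq request) :
  pairwise unserved_by (critical_requests rs).
Proof. exact: critical_step_unserved. Qed.

Lemma ancestor_refl (v : V) : ancestor par v v.
Proof.
have card_gt0 : (0 < #|V|)%N by apply/card_gt0P; exists v.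
by apply/existsP; exists (Ordinal card_gt0).
Qed.

Lemma path_service_same_node (sv : service R V) (q1 q2 : request) :
  satisfies sv q1 -> satisfies sv q2 -> deadline_le q1 q2 ->
  req_node q1 = req_node q2 -> satisfies (path_service q1) q2.
Proof.
case/and3P=> _ _ t_le_d1 /and3P[_ a2_le_t _] d1_le_d2 same_node.
by rewrite /satisfies /= -same_node inE ancestor_refl (le_trans a2_le_t).
Qed.

Lemma served_critical_nodes_uniq (rs : seq request) (sv : service R V) :
  uniq (map (@req_node R V) [seq q <- critical_requests rs | satisfies sv q]).
Proof.
rewrite uniq_pairwise pairwise_map.
have sorted_unserved : pairwise [rel q1 q2 | deadline_le q1 q2 && unserved_by q1 q2]
                         (critical_requests rs).
  by rewrite pairwise_relI critical_sorted critical_unserved.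
apply: (sub_in_pairwise (P := satisfies sv)) (filter_all _ _)
         (pairwise_filter _ sorted_unserved).
move=> q1 q2 sq1 sq2 /andP[d12 uns]; apply/eqP => same_node.
by move/negP: uns; apply; apply: path_service_same_node sq1 sq2 d12 same_node.
Qed.

Section Costs.
Variable c : V -> R.
Hypothesis c_ge0 : forall v, 0 <= c v.

Lemma path_service_cost (q : request) :
  increasing_tree par c ->
  service_cost c (path_service q) <= (depth par)%:R * c (req_node q).
Proof.
move=> incr; rewrite /service_cost /=.
apply: (@le_trans _ _ (\sum_(u in root_path par (req_node q)) c (req_node q))).
  by apply: ler_sum => u; rewrite inE; apply: incr.
rewrite sumr_const -[_ *+ #|_|]mulr_natl ler_wpM2r // ler_nat.
exact: (@leq_bigmax _ (fun v => #|root_path par v|)).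
Qed.

Lemma served_critical_cost (rs : seq request) (sv : service R V) :
  \sum_(q <- critical_requests rs | satisfies sv q) c (req_node q)
    <= service_cost c sv.
Proof.
rewrite -big_filter -(big_map (@req_node R V) xpredT c).
apply: ler_sum_uniq_subset => //; first exact: served_critical_nodes_uniq.
by move=> u /mapP[q]; rewrite mem_filter => /andP[/andP[]] + _ _ ->.
Qed.

Lemma critical_charging (rs : seq request) (sch : schedule R V) :
  feasible sch rs ->
  \sum_(q <- critical_requests rs) c (req_node q) <= schedule_cost c sch.
Proof.
move=> feas.
apply: (@le_trans _ _ (\sum_(q <- critical_requests rs) \sum_(sv <- sch)
          (if satisfies sv q then c (req_node q) else 0))).
  rewrite big_seq [X in _ <= X]big_seq; apply: ler_sum => q /critical_mem qrs.
  have /hasP[sv sv_in sv_q] := allP feas q qrs.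
  rewrite (big_rem sv sv_in) /= sv_q lerDl.
  by apply: sumr_ge0 => sv' _; case: ifP.
rewrite exchange_big; apply: ler_sum => sv _.
by rewrite -big_mkcond served_critical_cost.
Qed.

End Costs.
End Noadd.

Theorem mainTheorem1 (R : realFieldType) (V : finType) (par : V -> V) (r : V)
    (c : V -> R) (rs : seq (request R V)) :
  is_rooted_tree par r ->
  (forall v, 0 < c v) ->
  increasing_tree par c ->
  (forall q, q \in rs -> req_arr q <= req_dl q) ->
  uniq (map (@req_dl R V) rs) ->
  forall sch : schedule R V,
    (forall s, s \in sch -> valid_service par r s) ->
    feasible sch rs ->
    schedule_cost c (noadd par rs) <= (depth par)%:R * schedule_cost c sch.
Proof.
move=> _ c_gt0 incr _ _ sch _ feas.
have c_ge0 v : 0 <= c v by apply: ltW.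
rewrite noadd_critical /schedule_cost big_map.
apply: (@le_trans _ _ (\sum_(q <- critical_requests par rs)
                          (depth par)%:R * c (req_node q))).
  by apply: ler_sum => q _; apply: path_service_cost.
by rewrite -mulr_sumr ler_wpM2l ?ler0n ?critical_charging.
Qed.
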